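(* Let $V$ be a nonempty finite set, $C$ a partition of $V$, $k>0$, $G=(V,E)$ the clique graph of $C$ with edge weight $k$, and $0<\beta<1$. Let $\epsilon=\min(\beta,1-\beta,1/|V|)/2$. Then for a clustering $D$ of $V$: if $D=C$ then $\sum_{d\in D}\left(\frac{w_d}{v_d}-\beta\right)=(1-\beta)|C|$, while if $D\neq C$ then $\sum_{d\in D}\left(\frac{w_d}{v_d}-\beta\right)<(1-\beta)|C|-\epsilon$.
   Context: A clustering of $V$ is a partition of $V$ into nonempty pairwise disjoint sets. The clique graph of a partition $C$ of $V$ with edge weight $k$ is $G=(V,E)$ with $E(i,j)=k$ if $i$ and $j$ lie in the same block of $C$ (including $i=j$) and $E(i,j)=0$ otherwise. For $d\subseteq V$: $v_d=\sum_{i\in d}\sum_{j\in V}E(i,j)$ and $w_d=\sum_{i,j\in d}E(i,j)$. *)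

From mathcomp Require Import all_boot all_order all_algebra.
Set Implicit Arguments. Unset Strict Implicit. Unset Printing Implicit Defensive.
Import Order.TTheory GRing.Theory Num.Theory.
Local Open Scope ring_scope.

Definition clustering (T : finType) (P : {set {set T}}) : bool :=
  partition P [set: T].

(* Clique graph of the partition C with edge weight k:
   E i j = k if i and j lie in the same block of C (including i = j), 0 otherwise. *)
Definition clique_graph (R : numDomainType) (T : finType) (C : {set {set T}})
  (k : R) (i j : T) : R :=
  if [exists c in C, (i \in c) && (j \in c)] then k else 0.

Definition vol (R : numDomainType) (T : finType) (E : T -> T -> R) (d : {set T}) : R :=
  \sum_(i in d) \sum_(j : T) E i j.

Definition wgt (R : numDomainType) (T : finType) (E : T -> T -> R) (d : {set T}) : R :=
  \sum_(i in d) \sum_(j in d) E i j.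

(* With unit weights, the ratio w_d / v_d of a cluster d is
   sum_(i in d) |d :&: B_i| / sum_(i in d) |B_i|, where B_i is the block of C
   containing i; the weight k cancels.  This ratio is at most 1, and at most
   s_d = sum_(i in d) 1 / |B_i|, whose sum over any clustering is |C|.  A
   cluster outside C either meets two blocks, and then its ratio is at most
   s_d - 1/|V|, or lies strictly inside a block, and then it is at most
   1 - 1/|V|.  So if D <> C, the sum of the ratios is at most both |D| and |C|,
   and 1/|V| less than one of them; comparing |D| with |C| yields the gap. *)

From mathcomp Require Import all_boot all_order all_algebra.
From mathcomp Require Import lra.
Import Order.TTheory GRing.Theory Num.Theory.
Local Open Scope ring_scope.
Set Implicit Arguments. Unset Strict Implicit.

Lemma clique_graphZ (R : numDomainType) (T : finType) (C : {set {set T}}) (k : R) i j :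
  clique_graph C k i j = k * clique_graph C 1 i j.
Proof. by rewrite /clique_graph; case: ifP; rewrite ?mulr1 ?mulr0. Qed.

Lemma wgt_clique_graphZ (R : numDomainType) (T : finType) (C : {set {set T}}) (k : R) d :
  wgt (clique_graph C k) d = k * wgt (clique_graph C 1) d.
Proof.
rewrite /wgt mulr_sumr; apply: eq_bigr => i _; rewrite mulr_sumr.
by apply: eq_bigr => j _; apply: clique_graphZ.
Qed.

Lemma vol_clique_graphZ (R : numDomainType) (T : finType) (C : {set {set T}}) (k : R) d :
  vol (clique_graph C k) d = k * vol (clique_graph C 1) d.
Proof.
rewrite /vol mulr_sumr; apply: eq_bigr => i _; rewrite mulr_sumr.
by apply: eq_bigr => j _; apply: clique_graphZ.
Qed.

Lemma clique_graph_ratio (R : numFieldType) (T : finType) (C : {set {set T}}) (k : R) d :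
  k != 0 ->
  wgt (clique_graph C k) d / vol (clique_graph C k) d =
  wgt (clique_graph C 1) d / vol (clique_graph C 1) d.
Proof.
by move=> k_neq0; rewrite wgt_clique_graphZ vol_clique_graphZ invfM mulrACA divff ?mul1r.
Qed.

Lemma partition_subset_eq (T : finType) (P Q : {set {set T}}) (D : {set T}) :
  partition P D -> partition Q D -> P \subset Q -> P = Q.
Proof.
move=> partP partQ sPQ; apply/eqP; rewrite eqEsubset sPQ /=.
apply/subsetP => B BQ; have /set0Pn [x xB] := partition_neq0 partQ BQ.
have xP : x \in cover P.
  by rewrite (cover_partition partP); apply: subsetP xB; apply: partitionS BQ.
have PxQ : pblock P x \in Q by apply: subsetP sPQ _ (pblock_mem xP).
have trivQ := partition_trivIset partQ.
by rewrite -(def_pblock trivQ BQ xB) (def_pblock trivQ PxQ) ?mem_pblock // pblock_mem.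
Qed.

Lemma ler_sum_gap (R : numDomainType) (I : finType) (A : {pred I}) (F G : I -> R) i0 u :
  i0 \in A -> (forall i, i \in A -> F i <= G i) -> F i0 <= G i0 - u ->
  \sum_(i in A) F i <= \sum_(i in A) G i - u.
Proof.
move=> Ai0 leFG leFG0.
rewrite (bigD1 i0) //= [X in _ <= X - _](bigD1 i0) //= addrAC lerD //.
by apply: ler_sum => i /andP[Ai _]; apply: leFG.
Qed.

Lemma ler_pdivrB (R : realFieldType) (x y c u : R) :
  0 < y -> x + y * u <= y * c -> x / y <= c - u.
Proof. by move=> y_gt0 h; rewrite ler_pdivrMr //; lra. Qed.

Lemma penalized_sum_lt (R : realFieldType) (S beta u : R) (a c : nat) :
  0 < beta -> beta < 1 -> 0 < u ->
  S <= a%:R -> S <= c%:R -> S <= c%:R - u \/ S <= a%:R - u ->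
  S - beta * a%:R < (1 - beta) * c%:R - Num.min beta (Num.min (1 - beta) u) / 2.
Proof.
set eps := _ / 2 => beta_gt0 beta_lt1 u_gt0 leSa leSc gap.
have eps_beta : eps <= beta / 2 by rewrite ler_pM2r ?invr_gt0 // ge_min lexx.
have eps_1beta : eps <= (1 - beta) / 2 by rewrite ler_pM2r ?invr_gt0 // !ge_min lexx orbT.
have eps_u : eps <= u / 2 by rewrite ler_pM2r ?invr_gt0 // !ge_min lexx !orbT.
case: (ltngtP a c) gap => [lt_ac _ | lt_ca _ | -> gap].
- have : (1 - beta) * (a%:R + 1) <= (1 - beta) * c%:R.
    by apply: ler_wpM2l; [rewrite subr_ge0 ltW | rewrite natr1 ler_nat].
  lra.
- have : beta * (c%:R + 1) <= beta * a%:R.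
    by apply: ler_wpM2l; [rewrite ltW | rewrite natr1 ler_nat].
  lra.
- by case: gap => gap; lra.
Qed.

Section CliqueGraphOfPartition.
Variables (R : realFieldType) (T : finType) (C : {set {set T}}).
Hypothesis partC : partition C [set: T].
Implicit Types (d : {set T}) (i j : T).

Local Notation E := (clique_graph C (1 : R)).
Local Notation n i := (#|pblock C i|%:R : R).

Let trivC : trivIset C := partition_trivIset partC.

Lemma mem_pblockC i : i \in pblock C i.
Proof. by rewrite mem_pblock (cover_partition partC) inE. Qed.

Lemma pblockC_mem i : pblock C i \in C.
Proof. by rewrite pblock_mem // (cover_partition partC) inE. Qed.

Lemma clique_graph1E i j : E i j = if j \in pblock C i then 1 else 0.
Proof.
rewrite /clique_graph; congr (if _ then _ else _); apply/existsP/idP.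
  by case=> c /andP[cC /andP[ic jc]]; rewrite (def_pblock trivC cC ic).
by move=> jBi; exists (pblock C i); rewrite pblockC_mem mem_pblockC.
Qed.

Lemma vol_clique_graph1 d : vol E d = \sum_(i in d) n i.
Proof.
apply: eq_bigr => i _; under eq_bigr do rewrite clique_graph1E.
by rewrite -big_mkcond sumr_const.
Qed.

Lemma wgt_clique_graph1 d : wgt E d = \sum_(i in d) #|d :&: pblock C i|%:R.
Proof.
apply: eq_bigr => i _; under eq_bigr do rewrite clique_graph1E.
rewrite -big_mkcondr sumr_const; congr (_%:R); apply: eq_card => j.
by rewrite inE.
Qed.

Lemma blocksize_gt0 i : 0 < n i.
Proof. by rewrite ltr0n; apply/card_gt0P; exists i; apply: mem_pblockC. Qed.

Lemma blocksize_le_card i : n i <= #|T|%:R.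
Proof. by rewrite ler_nat max_card. Qed.

Lemma vol_clique_graph1_gt0 d : d != set0 -> 0 < vol E d.
Proof.
case/set0Pn=> i di; rewrite vol_clique_graph1 (bigD1 i) //=.
by rewrite ltr_wpDr ?blocksize_gt0 // sumr_ge0 // => j _; apply: ltW; apply: blocksize_gt0.
Qed.

Lemma wgt_le_vol_clique_graph1 d : wgt E d <= vol E d.
Proof.
rewrite wgt_clique_graph1 vol_clique_graph1; apply: ler_sum => i _.
by rewrite ler_nat subset_leq_card // subsetIr.
Qed.

Lemma wgt_add_vol_le_vol_clique_graph1 d :
  (forall i, i \in d -> d \proper pblock C i) ->
  wgt E d + vol E d / #|T|%:R <= vol E d.
Proof.
move=> d_proper; rewrite wgt_clique_graph1 vol_clique_graph1 mulr_suml -big_split /=.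
apply: ler_sum => i di; have dBi := d_proper i di.
rewrite (setIidPl (proper_sub dBi)).
have ltdB : #|d|%:R + 1 <= n i :> R by rewrite natr1 ler_nat proper_card.
have T_gt0 : 0 < #|T|%:R :> R := lt_le_trans (blocksize_gt0 i) (blocksize_le_card i).
have ni_le1 : n i / #|T|%:R <= 1 by rewrite ler_pdivrMr // mul1r blocksize_le_card.
lra.
Qed.

Lemma vol_mul_sum_inv_blocksize d :
  vol E d * \sum_(i in d) (n i)^-1 =
  wgt E d + \sum_(j in d) \sum_(i in d :\: pblock C j) n j / n i.
Proof.
rewrite wgt_clique_graph1 vol_clique_graph1 mulr_suml -big_split /=.
apply: eq_bigr => j _; rewrite mulr_sumr (big_setID (pblock C j)) /=; congr (_ + _).
rewrite -[RHS]sumr_const; apply: eq_bigr => i; rewrite inE => /andP[_ iBj].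
by rewrite (same_pblock trivC iBj) divff // lt0r_neq0 // blocksize_gt0.
Qed.

Lemma wgt_le_vol_mul_sum_inv_blocksize d :
  wgt E d <= vol E d * \sum_(i in d) (n i)^-1.
Proof.
rewrite vol_mul_sum_inv_blocksize lerDl.
by apply: sumr_ge0 => j _; apply: sumr_ge0 => i _; rewrite divr_ge0 // ltW // blocksize_gt0.
Qed.

Lemma wgt_add_vol_le_vol_mul_sum_inv_blocksize d :
  (forall j, j \in d -> ~~ (d \subset pblock C j)) ->
  wgt E d + vol E d / #|T|%:R <= vol E d * \sum_(i in d) (n i)^-1.
Proof.
(* Each j in d has some i in d outside its block, and n j / n i >= n j / #|T|. *)
move=> d_spread; rewrite vol_mul_sum_inv_blocksize lerD2l vol_clique_graph1 mulr_suml.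
apply: ler_sum => j dj; have /set0Pn [i i_out] : d :\: pblock C j != set0.
  by rewrite setD_eq0 d_spread.
rewrite (bigD1 i) //= ler_wpDr //.
  by apply: sumr_ge0 => l _; rewrite divr_ge0 // ltW // blocksize_gt0.
rewrite ler_pM2l ?blocksize_gt0 // lef_pV2 ?posrE ?blocksize_gt0 ?blocksize_le_card //.
exact: lt_le_trans (blocksize_gt0 i) (blocksize_le_card i).
Qed.

Lemma sum_inv_blocksize (D : {set {set T}}) : partition D [set: T] ->
  \sum_(d in D) \sum_(i in d) (n i)^-1 = #|C|%:R.
Proof.
move=> partD; rewrite -(set_partition_big _ partD) (set_partition_big _ partC) -sumr_const.
apply: eq_bigr => c cC; under eq_bigr => i ci do rewrite (def_pblock trivC cC ci).
rewrite sumr_const -[_^-1 *+ _]mulr_natr mulVf // pnatr_eq0 -lt0n card_gt0.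
exact: partition_neq0 partC cC.
Qed.

Lemma ratio_le_sum_inv_blocksize d : d != set0 ->
  wgt E d / vol E d <= \sum_(i in d) (n i)^-1.
Proof.
move=> d_neq0; rewrite ler_pdivrMr ?vol_clique_graph1_gt0 // mulrC.
exact: wgt_le_vol_mul_sum_inv_blocksize.
Qed.

Lemma ratio_le1 d : d != set0 -> wgt E d / vol E d <= 1.
Proof.
move=> d_neq0; rewrite ler_pdivrMr ?vol_clique_graph1_gt0 // mul1r.
exact: wgt_le_vol_clique_graph1.
Qed.

Lemma ratio_block d : d \in C -> wgt E d / vol E d = 1.
Proof.
move=> dC; have -> : wgt E d = vol E d.
  rewrite wgt_clique_graph1 vol_clique_graph1; apply: eq_bigr => i di.
  by rewrite (def_pblock trivC dC di) setIid.
by rewrite divff // lt0r_neq0 // vol_clique_graph1_gt0 // (partition_neq0 partC dC).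
Qed.

Lemma ratio_gap d : d != set0 -> d \notin C ->
  wgt E d / vol E d <= \sum_(i in d) (n i)^-1 - #|T|%:R^-1 \/
  wgt E d / vol E d <= 1 - #|T|%:R^-1.
Proof.
move=> d_neq0 dNC; have vol_gt0 := vol_clique_graph1_gt0 d_neq0.
have /set0Pn [i0 di0] := d_neq0.
case: (boolP (d \subset pblock C i0)) => [dB | dNB].
  right; apply: ler_pdivrB => //; rewrite mulr1.
  apply: wgt_add_vol_le_vol_clique_graph1 => i di.
  rewrite (same_pblock trivC (subsetP dB i di)) properEneq dB andbT.
  by apply: contraNneq dNC => ->; apply: pblockC_mem.
left; apply: ler_pdivrB => //.
apply: wgt_add_vol_le_vol_mul_sum_inv_blocksize => j dj.
by apply: contra dNB => dBj; rewrite (same_pblock trivC (subsetP dBj i0 di0)).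
Qed.

End CliqueGraphOfPartition.

Theorem lemma2 (R : realFieldType) (T : finType) (C : {set {set T}}) (k beta : R) :
  (0 < #|T|)%N ->
  clustering C ->
  0 < k ->
  0 < beta -> beta < 1 ->
  let E := clique_graph C k in
  let eps := Num.min beta (Num.min (1 - beta) (#|T|%:R)^-1) / 2 in
  forall D : {set {set T}}, clustering D ->
    (D = C ->
       \sum_(d in D) (wgt E d / vol E d - beta) = (1 - beta) * #|C|%:R) /\
    (D <> C ->
       \sum_(d in D) (wgt E d / vol E d - beta) < (1 - beta) * #|C|%:R - eps).
Proof.
move=> T_gt0 partC k_gt0 beta_gt0 beta_lt1 E eps D partD.
have D_neq0 d : d \in D -> d != set0 := partition_neq0 partD.
rewrite sumrB sumr_const -[beta *+ _]mulr_natr.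
under eq_bigr do rewrite clique_graph_ratio ?lt0r_neq0 //.
split=> [-> | DneqC].
  by rewrite (eq_bigr _ (ratio_block R partC)) sumr_const mulrBl mul1r.
have /subsetPn [d dD dNC] : ~~ (D \subset C).
  by apply/negP => /(partition_subset_eq partD partC).
apply: penalized_sum_lt; rewrite ?invr_gt0 ?ltr0n //.
- rewrite -sumr_const; apply: ler_sum => d' d'D.
  exact: (ratio_le1 R partC (D_neq0 _ d'D)).
- rewrite -(sum_inv_blocksize R partC partD); apply: ler_sum => d' d'D.
  exact: (ratio_le_sum_inv_blocksize R partC (D_neq0 _ d'D)).
- rewrite -(sum_inv_blocksize R partC partD) -[#|D|%:R]sumr_const.
  case: (ratio_gap R partC (D_neq0 _ dD) dNC) => gap; [left | right].
  + apply: ler_sum_gap dD _ gap => d' d'D.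
    exact: (ratio_le_sum_inv_blocksize R partC (D_neq0 _ d'D)).
  + apply: ler_sum_gap dD _ gap => d' d'D.
    exact: (ratio_le1 R partC (D_neq0 _ d'D)).
Qed.
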